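(* Let $(\Omega,\mathcal E_\Omega,\mathbb P)$ be a probability space with data $X_{1:T}$, $\Theta$ a Borel subset of $\mathbf R^p$ with Borel $\sigma$-algebra, $\theta_0\in\Theta$, and $\theta^*_{T,C}$ a $\Theta$-valued random vector with $\theta^*_{T,C}\to\theta_0$ in $\mathbb P$-probability as $T\to\infty$. Let $\rho_P$ be the Prokhorov metric on probability measures on $\Theta$. Then: (i) $\rho_P(\delta_{\theta^*_{T,C}},\delta_{\theta_0})\to0$ in probability as $T\to\infty$; (ii) if moreover $u:\mathbf R^p\times\mathbf R^p\to\mathbf R_+$ satisfies: (a) $u=0$ outside $\Theta^2$ and $\theta\mapsto u(\theta,\dot\theta)$ is Borel measurable for each $\dot\theta\in\Theta$; (b) for each $\dot\theta\in\Theta$, $\theta\mapsto u(\dot\theta,\theta)$ is continuous in a neighborhood of $\theta_0$; (c) there is $r_1>0$ with $\int_\Theta\sup_{\dot\theta\in B_{r_1}(\theta_0)}u(\theta,\dot\theta)\,\lambda(d\theta)<\infty$; (d) there is $r_2>0$ with $\int_\Theta u(\theta,\dot\theta)\,\lambda(d\theta)>0$ for all $\dot\theta\in B_{r_2}(\theta_0)$; then, as $T\to\infty$, $$\rho_P\Big(\frac{\int_\cdot u(\theta,\theta^*_{T,C})\lambda(d\theta)}{\int_\Theta u(\dot\theta,\theta^*_{T,C})\lambda(d\dot\theta)},\ \frac{\int_\cdot u(\theta,\theta_0)\lambda(d\theta)}{\int_\Theta u(\dot\theta,\theta_0)\lambda(d\dot\theta)}\Big)\to0\ \text{in probability}.$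$
   Context: $\lambda$ is Lebesgue measure, $\delta_x$ the Dirac measure at $x$, and $B_r(\theta_0)$ the ball in $\Theta$ of radius $r$ centred at $\theta_0$. The displayed ratios denote probability measures $B\mapsto\int_B u(\theta,\cdot)\lambda(d\theta)/\int_\Theta u(\dot\theta,\cdot)\lambda(d\dot\theta)$ on Borel subsets of $\Theta$. *)

From HB Require Import structures.
From mathcomp Require Import all_boot all_order all_algebra.
From mathcomp Require Import all_classical all_reals all_analysis.
Set Implicit Arguments. Unset Strict Implicit. Unset Printing Implicit Defensive.
Import Order.TTheory GRing.Theory Num.Theory.
Local Open Scope classical_set_scope.
Local Open Scope ring_scope.

(* R^p is modelled as p.-tuple R, with the library's product (= Borel) sigma-algebra. *)

Definition eudist (R : realType) (p : nat) (x y : p.-tuple R) : R :=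
  Num.sqrt (\sum_(i < p) (tnth x i - tnth y i) ^+ 2).

Definition is_lebesgue (R : realType) (p : nat)
  (lam : set (p.-tuple R) -> \bar R) : Prop :=
  forall a b : p.-tuple R, (forall i, tnth a i <= tnth b i) ->
    lam [set x | forall i, tnth a i <= tnth x i <= tnth b i] =
    (\prod_(i < p) (tnth b i - tnth a i))%:E.

Definition ballT (R : realType) (p : nat) (Theta : set (p.-tuple R))
  (t0 : p.-tuple R) (r : R) : set (p.-tuple R) :=
  [set x | Theta x /\ eudist x t0 < r].

Definition enlarge (R : realType) (p : nat) (Theta : set (p.-tuple R))
  (A : set (p.-tuple R)) (e : R) : set (p.-tuple R) :=
  [set x | Theta x /\ exists2 y, A y & eudist x y < e].

Definition prokhorov (R : realType) (p : nat) (Theta : set (p.-tuple R))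
  (mu nu : set (p.-tuple R) -> \bar R) : \bar R :=
  ereal_inf [set e%:E | e in [set e : R | 0 < e /\
     forall A : set (p.-tuple R), measurable A -> A `<=` Theta ->
       (mu A <= nu (enlarge Theta A e) + e%:E)%E /\
       (nu A <= mu (enlarge Theta A e) + e%:E)%E]].

Definition post (R : realType) (p : nat) (lam : {measure set (p.-tuple R) -> \bar R})
  (Theta : set (p.-tuple R)) (u : p.-tuple R -> p.-tuple R -> R) (x : p.-tuple R)
  : set (p.-tuple R) -> \bar R :=
  fun B => (fine (\int[lam]_(th in B) (u th x)%:E) /
            fine (\int[lam]_(th in Theta) (u th x)%:E))%:E.

(* outer probability (coincides with P on measurable sets) *)
Definition outerP (d : measure_display) (Omega : measurableType d) (R : realType)
  (P : probability Omega R) (A : set Omega) : \bar R :=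
  ereal_inf [set P B | B in [set B | measurable B /\ A `<=` B]].

(* The Prokhorov distance between two Dirac masses at points of Theta is at most
   their distance, and the event {rho_P > e} is contained in the event that the
   estimator lies at distance at least del from theta0, whose probability tends to 0.
   For the posteriors, dominated convergence with the envelope of (c) makes
   y |-> u(., y) continuous in L^1(lam) at theta0, so near theta0 every mass
   int_B u(th, y) lam(dth), B a Borel subset of Theta, is uniformly close to its value
   at theta0 while the normalising mass stays away from 0 by (d); the posteriors then
   differ by at most e on every Borel set, without enlargement. *)

From HB Require Import structures.
From mathcomp Require Import all_boot all_order all_algebra.
From mathcomp Require Import all_classical all_reals all_analysis.
From mathcomp Require Import measurable_realfun lra.
Set Implicit Arguments.
Unset Strict Implicit.
Unset Printing Implicit Defensive.
Import Order.TTheory GRing.Theory Num.Theory.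
Local Open Scope classical_set_scope.
Local Open Scope ring_scope.

Section nonmeasurable_integral.
Local Open Scope ereal_scope.
Context d (T : measurableType d) (R : realType).
Variable mu : {measure set T -> \bar R}.

(* No measurability is needed: the integral of a nonnegative function is the supremum
   of the integrals of the simple functions below it.  The envelope in (c), a supremum
   over a ball, need not be measurable. *)
Lemma ge0_le_integral_nonmeasurable (f g : T -> \bar R) :
  (forall x, 0 <= f x) -> (forall x, f x <= g x) ->
  \int[mu]_x f x <= \int[mu]_x g x.
Proof.
move=> f0 fg; have g0 x : 0 <= g x by apply: le_trans (fg x).
have f0T x : setT x -> 0 <= f x by [].
have g0T x : setT x -> 0 <= g x by [].
have fpos x : (f \_ setT)^\+ x = f x.
  by rewrite patch_setT (ge0_funeposE f0T (in_setT x)).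
have gpos x : (g \_ setT)^\+ x = g x.
  by rewrite patch_setT (ge0_funeposE g0T (in_setT x)).
have fneg x : (f \_ setT)^\- x = 0.
  by rewrite patch_setT (ge0_funenegE f0T (in_setT x)).
have gneg x : (g \_ setT)^\- x = 0.
  by rewrite patch_setT (ge0_funenegE g0T (in_setT x)).
rewrite /integral; apply: leeB.
  apply: ereal_sup_le => _ [h hf <-]; exists h => //= x.
  by rewrite gpos; apply: le_trans (hf x) _; rewrite fpos.
apply: ereal_sup_le => _ [h hf <-]; exists h => //= x.
by rewrite fneg; apply: le_trans (hf x) _; rewrite gneg.
Qed.

Lemma ge0_le_subset_integral_nonmeasurable (D1 D2 : set T) (f g : T -> \bar R) :
  (forall x, 0 <= f x) -> (forall x, 0 <= g x) ->
  (forall x, D1 x -> f x <= g x) -> D1 `<=` D2 ->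
  \int[mu]_(x in D1) f x <= \int[mu]_(x in D2) g x.
Proof.
move=> f0 g0 fg D12; rewrite (integral_mkcond D1) (integral_mkcond D2).
apply: ge0_le_integral_nonmeasurable => x; rewrite /patch; first by case: ifP.
case: (boolP (x \in D1)) => [/set_mem xD1|_]; last by case: ifP.
by rewrite mem_set ?fg //; exact: D12.
Qed.

End nonmeasurable_integral.

Section eudist.
Variables (R : realType) (p : nat).
Implicit Types x y : p.-tuple R.

Lemma eudistxx x : eudist x x = 0.
Proof. by rewrite /eudist big1 ?sqrtr0// => i _; rewrite subrr expr0n. Qed.

Lemma eudistC x y : eudist x y = eudist y x.
Proof.
by rewrite /eudist; congr Num.sqrt; apply: eq_bigr => i _; rewrite -sqrrN opprB.
Qed.

Lemma measurable_eudist_gt d (Omega : measurableType d) (f : Omega -> p.-tuple R) y c :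
  measurable_fun setT f -> measurable [set w | c < eudist (f w) y].
Proof.
move=> mf; have mdist : measurable_fun setT (fun w => eudist (f w) y).
  apply: measurableT_comp; first exact: continuous_measurable_fun (@sqrt_continuous R).
  apply: measurable_sum => i; apply/measurable_funX/measurable_funB => //.
  exact: (measurable_fun_tnthP f).1 mf i.
have := mdist measurableT _ (measurable_itv `]c, +oo[); rewrite setTI.
by congr measurable; apply/seteqP; split => w /=; rewrite in_itv /= andbT.
Qed.

End eudist.

Section outer_probability.
Local Open Scope ereal_scope.
Variables (d : measure_display) (Omega : measurableType d) (R : realType).
Variable P : probability Omega R.

Lemma outerP_ge0 (A : set Omega) : 0 <= outerP P A.
Proof. by apply: le_ereal_inf_tmp => _ [B _ <-]. Qed.

Lemma outerP_le (A B : set Omega) : measurable B -> A `<=` B -> outerP P A <= P B.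
Proof. by move=> mB AB; apply: ge_ereal_inf; exists (P B) => //; exists B. Qed.

Lemma outerP_gt_cvg0 (p : nat) (theta0 : p.-tuple R)
    (thstar : nat -> Omega -> p.-tuple R)
    (mthstar : forall T, measurable_fun setT (thstar T))
    (cvg_thstar : forall e : R, (0 < e)%R ->
      (fun T => P [set w | (e < eudist (thstar T w) theta0)%R]) @ \oo --> 0)
    (F : nat -> Omega -> \bar R) (e : R) :
  (exists2 del : R, (0 < del)%R &
     forall T w, (eudist (thstar T w) theta0 < del)%R -> F T w <= e%:E) ->
  (fun T => outerP P [set w | e%:E < F T w]) @ \oo --> 0.
Proof.
move=> [del del0 Fle]; have del20 : (0 < del / 2)%R by rewrite divr_gt0.
apply: (@squeeze_cvge _ _ _ _ (cst 0) _
  (fun T => P [set w | (del / 2 < eudist (thstar T w) theta0)%R])); last 2 first.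
- exact: cvg_cst.
- exact: cvg_thstar.
apply: nearW => T; rewrite outerP_ge0 /=; apply: outerP_le.
  exact: measurable_eudist_gt.
move=> w /= Fw; rewrite (@lt_le_trans _ _ del) ?ltr_pdivrMr ?ltr_pMr ?ltr1n//.
by rewrite leNgt; apply: contraTN Fw => /Fle; rewrite leNgt => /negbTE ->.
Qed.

End outer_probability.

Section prokhorov.
Variables (R : realType) (p : nat) (Theta : set (p.-tuple R)).
Implicit Types (mu nu : set (p.-tuple R) -> \bar R) (A : set (p.-tuple R)).

Lemma prokhorov_le mu nu (e : R) : 0 < e ->
  (forall A, measurable A -> A `<=` Theta ->
     (mu A <= nu (enlarge Theta A e) + e%:E)%E /\
     (nu A <= mu (enlarge Theta A e) + e%:E)%E) ->
  (prokhorov Theta mu nu <= e%:E)%E.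
Proof. by move=> e0 close; apply: ge_ereal_inf; exists e%:E => //; exists e. Qed.

Lemma ballT_center (t : p.-tuple R) (r : R) : Theta t -> 0 < r -> ballT Theta t r t.
Proof. by move=> Theta_t r_gt0; split; rewrite ?eudistxx. Qed.

Lemma sub_enlarge A (e : R) : 0 < e -> A `<=` Theta -> A `<=` enlarge Theta A e.
Proof. by move=> e0 ATheta x Ax; split; [exact: ATheta|exists x; rewrite ?eudistxx]. Qed.

Lemma prokhorov_dirac_le (x y : p.-tuple R) (e : R) :
  Theta x -> Theta y -> eudist x y < e ->
  (prokhorov Theta (\d_x) (\d_y) <= e%:E)%E.
Proof.
move=> Tx Ty xy; have e0 : 0 < e by apply: le_lt_trans xy; exact: sqrtr_ge0.
have dirac_le (a b : bool) : (a -> b) -> ((a%:R)%:E <= (b%:R)%:E + e%:E)%E.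
  rewrite -EFinD lee_fin; case: a => [/(_ isT) ->|_]; first by rewrite lerDl ltW.
  by apply: addr_ge0; [case: b|exact: ltW].
apply: prokhorov_le => // A mA ATheta; rewrite !diracE.
split; apply: dirac_le => /set_mem Az; apply/mem_set; split => //.
  by exists x; rewrite // eudistC.
by exists y.
Qed.

End prokhorov.

Lemma ratio_perturb (R : realFieldType) (a b a0 b0 eta e : R) :
  0 <= a <= b -> 0 <= a0 <= b0 -> 0 < b0 ->
  `|a - a0| <= eta -> `|b - b0| <= eta -> eta <= b0 / 2 -> eta * 4 <= e * b0 ->
  a / b <= a0 / b0 + e /\ a0 / b0 <= a / b + e.
Proof.
move=> /andP[a_ge0 ab] /andP[a0_ge0 ab0] b0_gt0.
move=> /ler_normlP[? ?] /ler_normlP[? ?] eta_b0 eta_e.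
have b_gt0 : 0 < b by lra.
have xb : (a / b) * b = a by rewrite mulfVK ?gt_eqF.
have yb0 : (a0 / b0) * b0 = a0 by rewrite mulfVK ?gt_eqF.
set x := a / b in xb *; set y := a0 / b0 in yb0 *.
have x_ge0 : 0 <= x by rewrite /x divr_ge0 // ltW.
have y_ge0 : 0 <= y by rewrite /y divr_ge0 // ltW.
have x_le1 : x <= 1 by rewrite /x ler_pdivrMr // mul1r.
have y_le1 : y <= 1 by rewrite /y ler_pdivrMr // mul1r.
split; nra.
Qed.

Section posterior_continuity.
Local Open Scope ereal_scope.
Variables (R : realType) (p : nat) (lam : {measure set (p.-tuple R) -> \bar R}).
Variables (Theta : set (p.-tuple R)) (theta0 : p.-tuple R) (u : p.-tuple R -> p.-tuple R -> R).
Hypothesis mTheta : measurable Theta.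
Hypothesis Theta_theta0 : Theta theta0.
Hypothesis u_ge0 : forall x y, (0 <= u x y)%R.
Hypothesis measurable_u : forall y, Theta y -> measurable_fun setT (fun th => u th y).
Hypothesis continuous_u : forall y, Theta y -> exists2 r : R, (0 < r)%R &
  forall t, (eudist t theta0 < r)%R ->
    forall e : R, (0 < e)%R -> exists2 del : R, (0 < del)%R &
      forall s, (eudist s t < del)%R -> (`|u y s - u y t| < e)%R.
Variable r1 : R.
Hypothesis r1_gt0 : (0 < r1)%R.

Let envelope th := ereal_sup [set (u th y)%:E | y in ballT Theta theta0 r1].

Hypothesis integrable_envelope : \int[lam]_(th in Theta) envelope th < +oo.

Let ball_center := ballT_center Theta_theta0 r1_gt0.

Let le_envelope th y : ballT Theta theta0 r1 y -> (u th y)%:E <= envelope th.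
Proof. by move=> ball_y; apply: ereal_sup_ubound; exists y. Qed.

Let envelope_ge0 th : 0 <= envelope th.
Proof. by apply: le_trans (le_envelope th ball_center); rewrite lee_fin. Qed.

Lemma integral_u_fin_num {B : set (p.-tuple R)} {y : p.-tuple R} :
  ballT Theta theta0 r1 y -> B `<=` Theta ->
  \int[lam]_(th in B) (u th y)%:E \is a fin_num.
Proof.
move=> ball_y BTheta; rewrite ge0_fin_numE; last by apply: integral_ge0 => th _; rewrite lee_fin.
apply: le_lt_trans integrable_envelope.
apply: ge0_le_subset_integral_nonmeasurable => //.
- by move=> th; rewrite lee_fin.
- by move=> th _; exact: le_envelope.
Qed.

Lemma integral_dist_u_cvg0 (xs : nat -> p.-tuple R) :
  (forall n, ballT Theta theta0 r1 (xs n)) ->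
  (fun n => eudist (xs n) theta0) @ \oo --> 0%R ->
  (fun n => \int[lam]_(th in Theta) `|(u th (xs n))%:E - (u th theta0)%:E|) @ \oo --> 0.
Proof.
move=> ball_xs xs_theta0.
have mu_xs n : measurable_fun Theta (EFin \o (fun th => u th (xs n))).
  apply/measurable_EFinP/(measurable_funS measurableT) => //.
  by apply: measurable_u; case: (ball_xs n).
have mu0 : measurable_fun Theta (EFin \o (fun th => u th theta0)).
  by apply/measurable_EFinP/(measurable_funS measurableT) => //; exact: measurable_u.
have u_cvg : {ae lam, forall th, Theta th ->
    (fun n => (u th (xs n))%:E) @ \oo --> (u th theta0)%:E}.
  apply: aeW => th Theta_th; apply: cvg_EFin; first exact: nearW.
  apply/cvgrPdist_lt => e e0.
  have [r r0 cont] := continuous_u Theta_th.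
  have [del del0 close] := cont theta0 ltac:(by rewrite eudistxx) e e0.
  near=> n; rewrite distrC; apply: close.
  by near: n; exact: cvgr_lt xs_theta0 _ del0.
(* unlike the envelope, this countable supremum is measurable *)
pose g th := esups (fun n => (u th (xs n))%:E) 0%N.
have g_ge0 th : 0 <= g th.
  apply: (@le_trans _ _ (u th (xs 0%N))%:E); first by rewrite lee_fin.
  by apply: ereal_sup_ubound; exists 0%N.
have integrable_g : lam.-integrable Theta g.
  apply/integrableP; split; first exact: (measurable_fun_esups (f := fun n th => _)).
  apply: le_lt_trans integrable_envelope.
  apply: ge0_le_subset_integral_nonmeasurable => // th Theta_th.
  rewrite gee0_abs//.
  by apply: ereal_sup_le => _ [k _ <-]; exists (xs k).
have dominated : {ae lam, forall th n, Theta th -> `|(u th (xs n))%:E| <= g th}.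
  apply: aeW => th n _; rewrite gee0_abs ?lee_fin//.
  by apply: ereal_sup_ubound; exists n.
by have [] := dominated_convergence mTheta mu_xs mu0 u_cvg integrable_g dominated.
Unshelve. all: by end_near.
Qed.

Lemma integral_dist_u_small (eta : R) : (0 < eta)%R ->
  exists2 del : R, (0 < del)%R & forall x, ballT Theta theta0 del x ->
    \int[lam]_(th in Theta) `|(u th x)%:E - (u th theta0)%:E| <= eta%:E.
Proof.
move=> eta0; apply: contrapT => no_del.
have far n : exists x, [/\ ballT Theta theta0 r1 x, (eudist x theta0 < harmonic n)%R &
    eta%:E < \int[lam]_(th in Theta) `|(u th x)%:E - (u th theta0)%:E|].
  apply: contrapT => no_far; apply: no_del; exists (Num.min r1 (harmonic n)).
    by rewrite lt_min r1_gt0 harmonic_gt0.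
  move=> x; case=> Theta_x; rewrite lt_min; case/andP => xr1 xn; rewrite leNgt.
  by apply/negP => far_x; apply: no_far; exists x.
have [xs xs_far] := choice far.
have ball_xs n : ballT Theta theta0 r1 (xs n) by case: (xs_far n).
have dist_cvg : (fun n => eudist (xs n) theta0) @ \oo --> 0%R.
  have dist_le : \forall n \near \oo, (cst 0 n <= eudist (xs n) theta0 <= harmonic n)%R.
    by apply: nearW => n; rewrite /= sqrtr_ge0 ltW //; case: (xs_far n).
  by apply: (squeeze_cvgr dist_le); [exact: (cvg_cst 0%R)|exact: cvg_harmonic].
have [N _ small] : \forall n \near \oo,
    \int[lam]_(th in Theta) `|(u th (xs n))%:E - (u th theta0)%:E| < eta%:E.
  exact: integral_dist_u_cvg0 ball_xs dist_cvg _ (open_ereal_lt' _).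
by case: (xs_far N) => _ _ /lt_trans/(_ (small N (leqnn N))); rewrite ltxx.
Qed.

Let mass y B := fine (\int[lam]_(th in B) (u th y)%:E).

Let mass_ge0 y B : (0 <= mass y B)%R.
Proof. by apply/fine_ge0/integral_ge0 => th _; rewrite lee_fin. Qed.

Let integrable_u {y B} : ballT Theta theta0 r1 y -> measurable B -> B `<=` Theta ->
  lam.-integrable B (EFin \o (fun th => u th y)).
Proof.
move=> ball_y mB BTheta; apply/integrableP; split.
  apply/measurable_EFinP/(measurable_funS measurableT) => //.
  by apply: measurable_u; case: ball_y.
under eq_integral do rewrite gee0_abs ?lee_fin//.
by rewrite -ge0_fin_numE ?integral_u_fin_num//; apply: integral_ge0 => th _; rewrite lee_fin.
Qed.

Let mass_le y B C : ballT Theta theta0 r1 y -> B `<=` C -> C `<=` Theta ->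
  (mass y B <= mass y C)%R.
Proof.
move=> ball_y BC CTheta; apply: fine_le; rewrite ?integral_u_fin_num//.
  exact: subset_trans CTheta.
by apply: ge0_le_subset_integral_nonmeasurable => // th; rewrite lee_fin.
Qed.

Let mass_dist x B (eta : R) : ballT Theta theta0 r1 x -> measurable B -> B `<=` Theta ->
  \int[lam]_(th in Theta) `|(u th x)%:E - (u th theta0)%:E| <= eta%:E ->
  (`|mass x B - mass theta0 B| <= eta)%R.
Proof.
move=> ball_x mB BTheta L1_le.
have fin_x := integral_u_fin_num ball_x BTheta.
have fin_0 := integral_u_fin_num ball_center BTheta.
suff : `|\int[lam]_(th in B) (u th x)%:E - \int[lam]_(th in B) (u th theta0)%:E| <= eta%:E.
  move: fin_x fin_0; rewrite /mass.
  by move: (\int[lam]_(th in B) _) (\int[lam]_(th in B) _) => [a| |] [b| |].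
have int_x := integrable_u ball_x mB BTheta.
have int_0 := integrable_u ball_center mB BTheta.
rewrite -(integralB mB int_x int_0).
have mdiff := emeasurable_funB (measurable_int _ int_x) (measurable_int _ int_0).
apply: le_trans (le_abse_integral _ mB mdiff) _.
apply: le_trans L1_le; apply: ge0_le_subset_integral_nonmeasurable => // th _.
Qed.

Hypothesis mass_theta0_gt0 : 0 < \int[lam]_(th in Theta) (u th theta0)%:E.

Lemma prokhorov_post_le (e : R) : (0 < e)%R ->
  exists2 del : R, (0 < del)%R & forall x, Theta x -> (eudist x theta0 < del)%R ->
    prokhorov Theta (post lam Theta u x) (post lam Theta u theta0) <= e%:E.
Proof.
move=> e0; set b0 := mass theta0 Theta.
have b0_gt0 : (0 < b0)%R.
  have := integral_u_fin_num ball_center (@subset_refl _ Theta).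
  by rewrite ge0_fin_numE ?(ltW mass_theta0_gt0)// => ?; apply/fine_gt0/andP.
pose eta := (Num.min (b0 / 2) (e * b0 / 4))%R.
have eta0 : (0 < eta)%R by rewrite lt_min !divr_gt0 ?mulr_gt0.
have [del del0 L1_small] := integral_dist_u_small eta0.
exists (Num.min del r1); first by rewrite lt_min del0 r1_gt0.
move=> x Theta_x; rewrite lt_min => /andP[x_del x_r1].
have ball_x : ballT Theta theta0 r1 x by [].
have close B : measurable B -> B `<=` Theta -> (`|mass x B - mass theta0 B| <= eta)%R.
  by move=> mB BTheta; apply: mass_dist => //; exact: L1_small.
apply: prokhorov_le => // A mA ATheta.
have AeTheta : enlarge Theta A e `<=` Theta by move=> y [].
have AAe := sub_enlarge e0 ATheta.
have [le_x le_0] : (mass x A / mass x Theta <= mass theta0 A / b0 + e /\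
                    mass theta0 A / b0 <= mass x A / mass x Theta + e)%R.
  apply: (ratio_perturb (eta := eta)); rewrite ?mass_ge0 ?mass_le ?close//.
  - by rewrite ge_min lexx.
  - have : (eta <= e * b0 / 4)%R by rewrite ge_min lexx orbT.
    by move: (e * b0)%R => eb; lra.
rewrite /post -!EFinD !lee_fin.
split; [apply: le_trans le_x _|apply: le_trans le_0 _];
  rewrite lerD2r ler_wpM2r ?invr_ge0 ?mass_ge0//; exact: mass_le.
Qed.

End posterior_continuity.

Theorem proposition5 (R : realType) (d : measure_display) (Omega : measurableType d)
  (P : probability Omega R) (p : nat)
  (lam : {measure set (p.-tuple R) -> \bar R}) (hlam : is_lebesgue lam)
  (Theta : set (p.-tuple R)) (mTheta : measurable Theta)
  (theta0 : p.-tuple R) (Htheta0 : Theta theta0)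
  (thstar : nat -> Omega -> p.-tuple R)
  (mthstar : forall T, measurable_fun setT (thstar T))
  (thstarT : forall T w, Theta (thstar T w))
  (cvg_thstar : forall e : R, 0 < e ->
     (fun T => P [set w | e < eudist (thstar T w) theta0]) @ \oo --> 0%E) :
  (forall e : R, 0 < e ->
     (fun T => outerP P [set w | (e%:E < prokhorov Theta (\d_(thstar T w)) (\d_theta0))%E])
       @ \oo --> 0%E)
  /\
  (forall u : p.-tuple R -> p.-tuple R -> R,
     (forall x y, 0 <= u x y) ->
     (* (a) *)
     (forall x y, ~ (Theta x /\ Theta y) -> u x y = 0) ->
     (forall y, Theta y -> measurable_fun setT (fun th => u th y)) ->
     (* (b) *)
     (forall y, Theta y -> exists2 r : R, 0 < r &
        forall t, eudist t theta0 < r ->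
          forall e : R, 0 < e -> exists2 del : R, 0 < del &
            forall s, eudist s t < del -> `|u y s - u y t| < e) ->
     (* (c) *)
     (exists2 r1 : R, 0 < r1 &
        (\int[lam]_(th in Theta)
            ereal_sup [set (u th y)%:E | y in ballT Theta theta0 r1] < +oo)%E) ->
     (* (d) *)
     (exists2 r2 : R, 0 < r2 &
        forall y, ballT Theta theta0 r2 y ->
          (0 < \int[lam]_(th in Theta) (u th y)%:E)%E) ->
     forall e : R, 0 < e ->
       (fun T => outerP P [set w |
           (e%:E < prokhorov Theta (post lam Theta u (thstar T w))
                                   (post lam Theta u theta0))%E])
         @ \oo --> 0%E).
Proof.
split=> [e e0|u u_ge0 _ measurable_u continuous_u [r1 r1_gt0 envelope_fin] [r2 r2_gt0 mass_gt0] e e0];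
  apply: (outerP_gt_cvg0 mthstar cvg_thstar).
  by exists e => // T w close; apply: prokhorov_dirac_le.
have mass_theta0_gt0 := mass_gt0 _ (ballT_center Htheta0 r2_gt0).
have [del del0 post_close] := prokhorov_post_le mTheta Htheta0 u_ge0 measurable_u
  continuous_u r1_gt0 envelope_fin mass_theta0_gt0 e0.
by exists del => // T w; apply: post_close.
Qed.
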